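(* Let $B_1,\dots,B_n$ be independent real-valued service times with finite means $\mu_i$, each with a distribution symmetric around its mean, and put $X_i=B_i-\mu_i$. Fix a sequence $\tau\in\mathsf S_n$ and use the mean-based schedule. Then for each $k\in\{1,\dots,n-1\}$ and each $\ell\in\{0,1,\dots,k\}$, $$\mathbb EW_{k+1}\ge\tfrac12\Bigl(\mathbb E\bigl(X_{\tau(1)}+\cdots+X_{\tau(k)}\bigr)^++\mathbb E\bigl(X_{\tau(1)}+\cdots+X_{\tau(\ell)}\bigr)^++\mathbb E\bigl(X_{\tau(\ell+1)}+\cdots+X_{\tau(k)}\bigr)^+\Bigr),$$ with empty sums equal to $0$.
   Context: Under sequence $\tau$ ($\tau(i)$ the patient in slot $i$) and the mean-based schedule (interarrival time after patient $j$ equal to $\mu_j$), the waiting times are $W_1=0$, $W_{i+1}=(W_i+X_{\tau(i)})^+$ with $a^+=\max\{0,a\}$. *)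

From HB Require Import structures.
From mathcomp Require Import all_boot all_order all_algebra all_fingroup.
From mathcomp Require Import all_classical all_reals all_analysis.
Set Implicit Arguments. Unset Strict Implicit. Unset Printing Implicit Defensive.
Import Order.TTheory GRing.Theory Num.Theory.
Import numFieldNormedType.Exports.
Local Open Scope classical_set_scope.
Local Open Scope ring_scope.

Section Defs.
Context {d : measure_display} {T : measurableType d} {R : realType}.

(* mutual independence of a finite family of real random variables:
   product rule for every choice of Borel sets (choosing A i = setT
   recovers the product rule for every subfamily) *)
Definition mutually_independent (P : probability T R) (n : nat)
    (B : 'I_n -> T -> R) : Prop :=
  forall A : 'I_n -> set R, (forall i, measurable (A i)) ->
    P (\bigcap_i (B i @^-1` A i)) = (\prod_(i < n) P (B i @^-1` A i))%E.

Definition mean (P : probability T R) (f : T -> R) : R :=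
  fine (\int[P]_x (f x)%:E)%E.

Definition symmetric_law (P : probability T R) (f : T -> R) : Prop :=
  forall A : set R, measurable A ->
    P (f @^-1` A) = P ((fun x => - f x) @^-1` A).

(* X-value in slot j (0-indexed) under sequence tau; 0 outside range *)
Definition slotX (n : nat) (X : 'I_n -> T -> R) (tau : {perm 'I_n})
    (j : nat) (x : T) : R :=
  match @insub nat (fun m => m < n)%N 'I_n j with
  | Some i => X (tau i) x
  | None => 0
  end.

(* waiting times (0-indexed): waiting 0 = W_1 = 0,
   waiting (j+1) = W_{j+2} = (W_{j+1} + X_{tau(j+1)})^+ *)
Fixpoint waiting (n : nat) (X : 'I_n -> T -> R) (tau : {perm 'I_n})
    (j : nat) (x : T) : R :=
  match j with
  | 0%N => 0
  | j'.+1 => Num.max 0 (waiting X tau j' x + slotX X tau j' x)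
  end.

End Defs.

From HB Require Import structures.
From mathcomp Require Import all_boot all_order all_algebra all_fingroup.
From mathcomp Require Import all_classical all_reals all_analysis.
From mathcomp Require Import measurable_realfun lra.
Import Order.TTheory GRing.Theory Num.Theory.
Import numFieldNormedType.Exports.
Local Open Scope classical_set_scope.
Local Open Scope ring_scope.

(* Put A = X_tau(1) + ... + X_tau(l) and C = X_tau(l+1) + ... + X_tau(k).
   Lindley's recursion gives W_(k+1) >= (C + A^+)^+ = lindley2 A C, and a case
   analysis gives lindley2 a c + lindley2 (-a) (-c) = H a c + H (-a) (-c) for
   H a c = ((a + c)^+ + a^+ + c^+) / 2.  Since the X_i are independent and each
   is symmetric, the vector (X_i)_i has the same law as its negative; so both
   sides of the identity have equal expectations at (A, C) and at (-A, -C), and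
   E H(A, C) = E lindley2 A C <= E W_(k+1). *)

Section TwoBlockLindley.
Context {R : realFieldType}.

Definition lindley2 (a c : R) : R := Num.max 0 (c + Num.max 0 a).

Definition posparts_avg (a c : R) : R :=
  2^-1 * (Num.max 0 (a + c) + Num.max 0 a + Num.max 0 c).

Local Ltac elim_max := repeat match goal with
  | |- context[Num.max 0 ?x] =>
      (rewrite (@max_r _ _ 0 x); last by lra) ||
      (rewrite (@max_l _ _ 0 x); last by lra)
  end.

Lemma lindley2_ge0 a c : 0 <= lindley2 a c.
Proof. by rewrite le_max lexx. Qed.

Lemma posparts_avg_ge0 a c : 0 <= posparts_avg a c.
Proof. by rewrite mulr_ge0 ?invr_ge0 ?ler0n ?addr_ge0 ?le_max ?lexx. Qed.

Lemma lindley2_le a c w : 0 <= w -> c <= w -> a + c <= w -> lindley2 a c <= w.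
Proof.
rewrite /lindley2 => w0 cw acw.
by case: (leP 0 a) => ?; case: (leP 0 (c + a)) => ?; case: (leP 0 c) => ?;
  elim_max; lra.
Qed.

Lemma lindley2_reflect a c :
  lindley2 a c + lindley2 (- a) (- c) =
  posparts_avg a c + posparts_avg (- a) (- c).
Proof.
rewrite /lindley2 /posparts_avg.
by case: (leP 0 a) => ?; case: (leP 0 c) => ?; case: (leP 0 (a + c)) => ?;
  elim_max; lra.
Qed.

End TwoBlockLindley.

Section MeasurableBlocks.
Context {d} {T : measurableType d} {R : realType}.

Lemma measurable_posp (h : T -> R) :
  measurable_fun setT h -> measurable_fun setT (fun x => Num.max 0 (h x)).
Proof. by move=> mh; apply: measurable_maxr => //; exact: measurable_cst. Qed.

Variables (f g : T -> R).
Hypotheses (mf : measurable_fun setT f) (mg : measurable_fun setT g).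

Lemma measurable_lindley2 :
  measurable_fun setT (fun x => lindley2 (f x) (g x)).
Proof.
by apply: measurable_posp; apply: measurable_funD => //; exact: measurable_posp.
Qed.

Lemma measurable_posparts_avg :
  measurable_fun setT (fun x => posparts_avg (f x) (g x)).
Proof.
apply: measurable_funM; first exact: measurable_cst.
apply: measurable_funD; first apply: measurable_funD;
  apply: measurable_posp => //.
exact: measurable_funD.
Qed.

Lemma ge0_integral_posparts_avg (mu : {measure set T -> \bar R}) :
  (\int[mu]_x (posparts_avg (f x) (g x))%:E =
   2^-1%:E * (\int[mu]_x (Num.max 0 (f x + g x))%:E +
              \int[mu]_x (Num.max 0 (f x))%:E +
              \int[mu]_x (Num.max 0 (g x))%:E))%E.
Proof.
have mp (h : T -> R) : measurable_fun setT h ->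
    measurable_fun setT (fun x => (Num.max 0 (h x))%:E).
  by move=> mh; apply/measurable_EFinP; exact: measurable_posp.
have p0 (h : T -> R) x : setT x -> (0 <= (Num.max 0 (h x))%:E)%E.
  by rewrite lee_fin le_max lexx.
have mfg := measurable_funD mf mg.
rewrite -(ge0_integralD mu measurableT (p0 _) (mp _ mfg) (p0 _) (mp _ mf)).
rewrite -(ge0_integralD mu measurableT _ _ (p0 _) (mp _ mg)); last 2 first.
- by move=> x _; apply: adde_ge0; exact: p0.
- by apply: emeasurable_funD; exact: mp.
rewrite -ge0_integralZl //.
- by apply: emeasurable_funD; first apply: emeasurable_funD; exact: mp.
- by move=> x _; apply: adde_ge0; first apply: adde_ge0; exact: p0.
Qed.

End MeasurableBlocks.

Section Waiting.
Context {d} {T : measurableType d} {R : realType} {n : nat}.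
Variables (X : 'I_n -> T -> R) (tau : {perm 'I_n}).

Lemma sum_slotX_opp a b x :
  \sum_(a <= j < b) slotX (fun i x => - X i x) tau j x =
  - \sum_(a <= j < b) slotX X tau j x.
Proof.
rewrite -sumrN; apply: eq_bigr => j _.
by rewrite /slotX; case: insub => [i|] //; rewrite oppr0.
Qed.

Lemma waiting_ge0 j x : 0 <= waiting X tau j x.
Proof. by case: j => [|j] //=; rewrite le_max lexx. Qed.

Lemma sum_slotX_le_waiting m j x :
  (m <= j)%N -> \sum_(m <= i < j) slotX X tau i x <= waiting X tau j x.
Proof.
elim: j => [|j IHj]; first by rewrite leqn0 => /eqP ->; rewrite big_geq.
rewrite leq_eqVlt => /orP [/eqP ->|lt_mj].
  by rewrite big_geq // waiting_ge0.
rewrite big_nat_recr //= le_max; apply/orP; right.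
by rewrite lerD2r; exact: IHj.
Qed.

Lemma lindley2_le_waiting l k x : (l <= k)%N ->
  lindley2 (\sum_(0 <= j < l) slotX X tau j x)
           (\sum_(l <= j < k) slotX X tau j x)
  <= waiting X tau k x.
Proof.
move=> lk; apply: lindley2_le; first exact: waiting_ge0.
  exact: sum_slotX_le_waiting.
by rewrite -big_cat_nat //; exact: sum_slotX_le_waiting.
Qed.

Hypothesis mX : forall i, measurable_fun setT (X i).

Lemma measurable_slotX j : measurable_fun setT (slotX X tau j).
Proof. by rewrite /slotX; case: insub => [i|] //; exact: measurable_cst. Qed.

Lemma measurable_sum_slotX a b :
  measurable_fun setT (fun x => \sum_(a <= j < b) slotX X tau j x).
Proof. by apply: measurable_sum => j; exact: measurable_slotX. Qed.

Lemma measurable_waiting j : measurable_fun setT (waiting X tau j).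
Proof.
elim: j => [|j IHj] /=; first exact: measurable_cst.
apply: measurable_maxr; first exact: measurable_cst.
by apply: measurable_funD => //; exact: measurable_slotX.
Qed.

End Waiting.

Lemma adde_self_inj (R : realDomainType) (x y : \bar R) :
  (x + x = y + y)%E -> x = y.
Proof.
case: x => [x| |]; case: y => [y| |] //= => -[xy].
by congr EFin; lra.
Qed.

Section SameLaw.
Context {d} {T : measurableType d} {d'} {V : measurableType d'} {R : realType}.
Variable mu : {measure set T -> \bar R}.

Lemma ge0_integral_same_law {Y Z : T -> V} :
  measurable_fun setT Y -> measurable_fun setT Z ->
  (forall S, measurable S -> mu (Y @^-1` S) = mu (Z @^-1` S)) ->
  forall phi : V -> R, measurable_fun setT phi -> (forall v, 0 <= phi v) ->
  (\int[mu]_x (phi (Y x))%:E = \int[mu]_x (phi (Z x))%:E)%E.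
Proof.
move=> mY mZ YZ phi mphi phi0.
have mephi : measurable_fun setT (fun v => (phi v)%:E).
  exact/measurable_EFinP.
have phi0' : {in setT, forall v, (0 <= (phi v)%:E)%E}.
  by move=> v _; rewrite lee_fin.
have eY := ge0_integral_pushforward mY mu measurableT mephi phi0'.
have eZ := ge0_integral_pushforward mZ mu measurableT mephi phi0'.
rewrite preimage_setT in eY eZ.
rewrite -[LHS]/(\int[mu]_(x in setT) _)%E -[RHS]/(\int[mu]_(x in setT) _)%E.
rewrite -eY -eZ; apply: eq_measure_integral => S mS _.
exact: YZ.
Qed.

(* Adding [E phi(Y) = E phi(s Y)] and [E psi(Y) = E psi(s Y)] to the pointwise
   identity gives [2 E phi(Y) = 2 E psi(Y)]. *)
Lemma ge0_integral_eq_by_symmetry {Y : T -> V} {s : V -> V} :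
  measurable_fun setT Y -> measurable_fun setT s ->
  (forall S, measurable S -> mu (Y @^-1` S) = mu ((s \o Y) @^-1` S)) ->
  forall phi psi : V -> R,
  measurable_fun setT phi -> measurable_fun setT psi ->
  (forall v, 0 <= phi v) -> (forall v, 0 <= psi v) ->
  (forall v, phi v + phi (s v) = psi v + psi (s v)) ->
  (\int[mu]_x (phi (Y x))%:E = \int[mu]_x (psi (Y x))%:E)%E.
Proof.
move=> mY ms Ys phi psi mphi mpsi phi0 psi0 phipsi.
have msY : measurable_fun setT (s \o Y) by exact: measurableT_comp.
have E := ge0_integral_same_law mY msY Ys.
apply: adde_self_inj.
rewrite {2}(E phi mphi phi0) {2}(E psi mpsi psi0).
rewrite -!ge0_integralD //; try by move=> x _; rewrite lee_fin.
all: try by apply/measurable_EFinP; apply: measurableT_comp.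
by apply: eq_integral => x _; rewrite -!EFinD phipsi.
Qed.

End SameLaw.

Section Rectangles.
Context {R : realType} {n : nat}.

Definition rectangle (A : 'I_n -> set R) : set ('I_n -> R) :=
  [set f | forall i, A i (f i)].

Definition rectangles : set (set ('I_n -> R)) :=
  [set rectangle A | A in [set A | forall i, measurable (A i)]].

Lemma rectangles_setI_closed : setI_closed rectangles.
Proof.
move=> _ _ [A mA <-] [B mB <-]; exists (fun i => A i `&` B i).
  by move=> i; exact: measurableI.
apply/seteqP; split => f /= h; first by split => i; case: (h i).
by case: h => hA hB i; split; [exact: hA|exact: hB].
Qed.

End Rectangles.

Local Notation vec R n := (g_sigma_algebraType (@rectangles R n)).

Section Vectors.
Context {R : realType} {n : nat}.

Lemma measurable_coord (i : 'I_n) :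
  measurable_fun [set: vec R n] (fun f => f i).
Proof.
move=> _ Y mY; apply: sub_sigma_algebra.
exists (fun j => if j == i then Y else setT); first by move=> j; case: eqP.
apply/seteqP; split => f /=.
  by move=> h; split => //; have := h i; rewrite eqxx.
by move=> [_ Yf] j; case: eqP => [->|].
Qed.

Context {d} {T : measurableType d}.

Lemma preimage_rectangle (Y : 'I_n -> T -> R) (A : 'I_n -> set R) :
  (fun x => fun i => Y i x) @^-1` rectangle A = \bigcap_i (Y i @^-1` A i).
Proof. by apply/seteqP; split => x /= h i; [move=> _|]; exact: h. Qed.

Lemma measurable_vec {Y : 'I_n -> T -> R} :
  (forall i, measurable_fun setT (Y i)) ->
  measurable_fun [set: T] (fun x => (fun i => Y i x) : vec R n).
Proof.
move=> mY.
apply: (@measurability _ _ T (vec R n) setT _ (@rectangles R n) erefl).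
move=> _ [_ [A mA <-] <-]; rewrite setTI preimage_rectangle.
apply: fin_bigcap_measurable => // i _.
by rewrite -(setTI (_ @^-1` _)); exact: mY.
Qed.

Variable P : probability T R.

Lemma joint_law_eq {Y Z : 'I_n -> T -> R} :
  (forall i, measurable_fun setT (Y i)) ->
  (forall i, measurable_fun setT (Z i)) ->
  (forall A, (forall i, measurable (A i)) ->
     P (\bigcap_i (Y i @^-1` A i)) = P (\bigcap_i (Z i @^-1` A i))) ->
  forall S : set (vec R n), measurable S ->
  P ((fun x => fun i => Y i x) @^-1` S) = P ((fun x => fun i => Z i x) @^-1` S).
Proof.
move=> mY mZ YZ.
(* the measure structure of a pushforward depends on a measurability proof and
   cannot be inferred *)
pose lawY := measure_function_pushforward__canonical__measure_function_Measure
  P (measurable_vec mY).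
pose lawZ := measure_function_pushforward__canonical__measure_function_Measure
  P (measurable_vec mZ).
apply: (@measure_unique _ R (vec R n) _ (fun=> setT) erefl
  (@rectangles_setI_closed R n) _ _ lawY lawZ).
- by move=> _; exists (fun=> setT) => //; apply/seteqP; split.
- by rewrite bigcup_const.
- move=> _ [A mA <-]; rewrite /lawY /lawZ /= /pushforward.
  by rewrite (preimage_rectangle Y) (preimage_rectangle Z); exact: YZ.
- move=> _; rewrite /lawY /= /pushforward preimage_setT.
  by rewrite probability_setT ltry.
Qed.

End Vectors.

Section Independence.
Context {d} {T : measurableType d} {R : realType}.
Context (P : probability T R) {n : nat}.

Lemma mutually_independent_comp (B : 'I_n -> T -> R) (g : 'I_n -> R -> R) :
  (forall i, measurable_fun setT (g i)) -> mutually_independent P B ->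
  mutually_independent P (fun i x => g i (B i x)).
Proof.
move=> mg indB A mA; apply: (indB (fun i => g i @^-1` A i)) => i.
by rewrite -(setTI (_ @^-1` _)); exact: mg.
Qed.

Lemma independent_rectangle_eq (Y Z : 'I_n -> T -> R) :
  mutually_independent P Y -> mutually_independent P Z ->
  (forall i A, measurable A -> P (Y i @^-1` A) = P (Z i @^-1` A)) ->
  forall A, (forall i, measurable (A i)) ->
  P (\bigcap_i (Y i @^-1` A i)) = P (\bigcap_i (Z i @^-1` A i)).
Proof.
move=> indY indZ YZ A mA; rewrite indY // indZ //.
by apply: eq_bigr => i _; exact: YZ.
Qed.

Lemma centered_joint_law_sym (B : 'I_n -> T -> R) (c : 'I_n -> R) :
  (forall i, measurable_fun setT (B i)) -> mutually_independent P B ->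
  (forall i, symmetric_law P (fun x => B i x - c i)) ->
  forall S : set (vec R n), measurable S ->
  P ((fun x i => B i x - c i) @^-1` S) =
  P ((fun x i => - (B i x - c i)) @^-1` S).
Proof.
move=> mB indB Bsym.
have mc i : measurable_fun setT (fun y : R => y - c i).
  exact: measurable_funB.
have mNc i : measurable_fun setT (fun y : R => - (y - c i)).
  exact: measurableT_comp.
apply: joint_law_eq.
- by move=> i; exact: measurableT_comp (mc i) (mB i).
- by move=> i; exact: measurableT_comp (mNc i) (mB i).
move=> A mA.
have := independent_rectangle_eq _ _ (mutually_independent_comp B _ mc indB)
  (mutually_independent_comp B _ mNc indB).
apply => // i D mD; exact: Bsym.
Qed.

End Independence.

Section SlotSums.
Context {d} {T : measurableType d} {R : realType}.
Context (P : probability T R) {n : nat}.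
Variables (X : 'I_n -> T -> R) (tau : {perm 'I_n}) (l k : nat).
Hypothesis mX : forall i, measurable_fun setT (X i).

Lemma ge0_integral_lindley2_le_waiting : (l <= k)%N ->
  (\int[P]_x (lindley2 (\sum_(0 <= j < l) slotX X tau j x)
                        (\sum_(l <= j < k) slotX X tau j x))%:E <=
   \int[P]_x (waiting X tau k x)%:E)%E.
Proof.
move=> lk; apply: ge0_le_integral => //.
- by move=> x _; rewrite lee_fin lindley2_ge0.
- by apply/measurable_EFinP/measurable_lindley2; exact: measurable_sum_slotX.
- exact/measurable_EFinP/measurable_waiting.
- by move=> x _; rewrite lee_fin; exact: lindley2_le_waiting.
Qed.

Hypothesis Xsym : forall S : set (vec R n), measurable S ->
  P ((fun x i => X i x) @^-1` S) = P ((fun x i => - X i x) @^-1` S).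

Lemma integral_lindley2_eq_posparts_avg :
  (\int[P]_x (lindley2 (\sum_(0 <= j < l) slotX X tau j x)
                        (\sum_(l <= j < k) slotX X tau j x))%:E =
   \int[P]_x (posparts_avg (\sum_(0 <= j < l) slotX X tau j x)
                            (\sum_(l <= j < k) slotX X tau j x))%:E)%E.
Proof.
pose coord i (f : vec R n) := f i.
have mcoord i : measurable_fun setT (coord i) := measurable_coord i.
pose vopp (f : vec R n) : vec R n := fun i => - f i.
have mvopp : measurable_fun setT vopp.
  by apply: measurable_vec => i; apply: measurableT_comp => //;
    exact: measurable_coord.
pose S a b (f : vec R n) := \sum_(a <= j < b) slotX coord tau j f.
have mS a b : measurable_fun setT (S a b) by exact: measurable_sum_slotX.
apply: (ge0_integral_eq_by_symmetry P (measurable_vec mX) mvopp Xsym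
  (fun f => lindley2 (S 0 l f) (S l k f))
  (fun f => posparts_avg (S 0 l f) (S l k f))).
- exact: measurable_lindley2.
- exact: measurable_posparts_avg.
- by move=> f; exact: lindley2_ge0.
- by move=> f; exact: posparts_avg_ge0.
- move=> f; have S_opp a b : S a b (vopp f) = - S a b f.
    exact: sum_slotX_opp coord tau a b f.
  by rewrite !S_opp lindley2_reflect.
Qed.

End SlotSums.

Theorem lemma3p4 (d : measure_display) (T : measurableType d) (R : realType)
  (P : probability T R) (n : nat) (B : 'I_n -> T -> R)
  (Bmeas : forall i, measurable_fun setT (B i))
  (Bint : forall i, P.-integrable setT (fun x => (B i x)%:E))
  (Bindep : mutually_independent P B)
  (Bsym : forall i, symmetric_law P (fun x => B i x - mean P (B i)))
  (tau : {perm 'I_n}) (k l : nat)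
  (hk1 : (1 <= k)%N) (hkn : (k <= n - 1)%N) (hlk : (l <= k)%N) :
  let X := fun i x => B i x - mean P (B i) in
  (\int[P]_x (waiting X tau k x)%:E >=
   (2^-1)%:E *
   (\int[P]_x (Num.max 0 (\sum_(0 <= j < k) slotX X tau j x))%:E +
    \int[P]_x (Num.max 0 (\sum_(0 <= j < l) slotX X tau j x))%:E +
    \int[P]_x (Num.max 0 (\sum_(l <= j < k) slotX X tau j x))%:E))%E.
Proof.
cbv zeta; set X := fun (i : 'I_n) (x : T) => B i x - mean P (B i).
have mX i : measurable_fun setT (X i).
  by apply: measurable_funB => //; exact: measurable_cst.
have Xsym :=
  centered_joint_law_sym P B (fun i => mean P (B i)) Bmeas Bindep Bsym.
apply: le_trans (ge0_integral_lindley2_le_waiting P X tau l k mX hlk).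
rewrite (integral_lindley2_eq_posparts_avg P X tau l k mX Xsym).
rewrite ge0_integral_posparts_avg; try exact: measurable_sum_slotX.
have sum_split x : \sum_(0 <= j < k) slotX X tau j x =
    \sum_(0 <= j < l) slotX X tau j x + \sum_(l <= j < k) slotX X tau j x.
  by rewrite -big_cat_nat.
by under eq_integral => x _ do rewrite -sum_split.
Qed.
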